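(* Let $A,B\in\mathbb R^{\mathcal N\times\mathcal N}$ with $A$ invertible, and assume that among the generalized eigenvalues $\lambda\in\mathbb C$ of $Av=\lambda Bv$ there is a unique positive one $\lambda>0$ of smallest modulus, and that it is simple. Let $u,u^*$, $k$, $M$, $\tilde u^*$, $P$, $P^*$ be as in the context. Let $u_N,u_N^*\in\mathbb R^{\mathcal N}$ with $\langle u_N^*,Au_N\rangle\neq0$, and let $k_N:=\frac{\langle u_N^*,Bu_N\rangle}{\langle u_N^*,Au_N\rangle}$ satisfy $k_N\notin\sigma\big((PMP)|_{[\operatorname{Span}\{\tilde u^*\}]^\perp}\big)$ and $k_N\notin\sigma\big((P^*M^TP^* )|_{[\operatorname{Span}\{u\}]^\perp}\big)$. Let $R_N=(B-k_NA)u_N$, $R_N^*=(B^T-k_NA^T)u_N^*$. Then $$|k_N-k|\le C_N^k\,\eta_N^k,\qquad \eta_N^k:=\frac{\|R_N\|\,\|R_N^*\|}{|\langle u_N^*,Au_N\rangle|},$$ where $$C_N^k:=\Big\|\big[P^*(P^*M^TP^*-k_NI)^+P^*\big]^T(M-kI)P(PMP-k_NI)^+PA^{-1}\Big\|.$$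
   Context: $\mathbb R^{\mathcal N}$ carries the Euclidean inner product $\langle\cdot,\cdot\rangle$ and norm $\|\cdot\|$; on matrices $\|\cdot\|$ is the induced operator norm. ''Simple'' means $k=1/\lambda$ is an algebraically simple eigenvalue of $M=A^{-1}B$. $u,u^*$ are unit vectors with $Au=\lambda Bu$, $A^Tu^*=\lambda B^Tu^*$; $\tilde u^*=A^Tu^*/\|A^Tu^*\|$; $P=I-\frac{u(\tilde u^* )^T}{\langle u,\tilde u^*\rangle}$, $P^*=I-\frac{\tilde u^*u^T}{\langle u,\tilde u^*\rangle}$ (here $\langle u,\tilde u^*\rangle\ne0$). The operator $(PMP-k_NI)^+$ is the linear map equal to the inverse of $(PMP-k_NI)|_{[\operatorname{Span}\{\tilde u^*\}]^\perp}$ (an invertible map of $[\operatorname{Span}\{\tilde u^*\}]^\perp$ onto itself) on $[\operatorname{Span}\{\tilde u^*\}]^\perp$ and equal to $0$ on $\operatorname{Span}\{u\}$; likewise $(P^*M^TP^*-k_NI)^+$ equals the inverse of $(P^*M^TP^*-k_NI)|_{[\operatorname{Span}\{u\}]^\perp}$ on $[\operatorname{Span}\{u\}]^\perp$ and $0$ on $\operatorname{Span}\{\tilde u^*\}$. *)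

From HB Require Import structures.
From mathcomp Require Import all_boot all_order all_algebra.
From mathcomp Require Import classical_sets reals.
From mathcomp Require Import complex.
Set Implicit Arguments. Unset Strict Implicit. Unset Printing Implicit Defensive.
Import Order.TTheory GRing.Theory Num.Theory.
Local Open Scope ring_scope.

Definition dotv {R : realType} {n : nat} (x y : 'cV[R]_n) : R := (x^T *m y) 0 0.

Definition vnorm {R : realType} {n : nat} (x : 'cV[R]_n) : R := Num.sqrt (dotv x x).

Definition opnorm {R : realType} {n : nat} (X : 'M[R]_n) : R :=
  sup [set vnorm (X *m x) | x in [set x : 'cV[R]_n | vnorm x = 1]]%classic.

Definition gen_eigenvalue {R : realType} {n : nat} (A B : 'M[R]_n) (mu : R[i]) : Prop :=
  exists v : 'cV[R[i]]_n, v != 0 /\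
    map_mx (real_complex R) A *m v = mu *: (map_mx (real_complex R) B *m v).

(* c is in the spectrum of the restriction of X to [Span{w}]^perp
   (X is assumed to map this subspace into itself). *)
Definition in_restr_spectrum {R : realType} {n : nat} (X : 'M[R]_n) (w : 'cV[R]_n) (c : R) : Prop :=
  exists v : 'cV[R]_n, v != 0 /\ dotv w v = 0 /\ X *m v = c *: v.

(* Q is the operator "(X)^+" relative to the decomposition Span{z} (+) [Span{w}]^perp:
   on [Span{w}]^perp it is the inverse of X restricted to [Span{w}]^perp
   (an invertible map of that subspace onto itself), and it vanishes on Span{z}. *)
Definition is_restr_pinv {R : realType} {n : nat} (X : 'M[R]_n) (w z : 'cV[R]_n) (Q : 'M[R]_n) : Prop :=
  Q *m z = 0 /\
  forall v : 'cV[R]_n, dotv w v = 0 ->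
    [/\ dotv w (X *m v) = 0, dotv w (Q *m v) = 0,
        X *m (Q *m v) = v & Q *m (X *m v) = v].

Definition projP {R : realType} {n : nat} (u w : 'cV[R]_n) : 'M[R]_n :=
  1%:M - (dotv u w)^-1 *: (u *m w^T).

From HB Require Import structures.
From mathcomp Require Import all_boot all_order all_algebra.
From mathcomp Require Import classical_sets reals.
From mathcomp Require Import complex.
From mathcomp Require Import ring.
Set Implicit Arguments. Unset Strict Implicit. Unset Printing Implicit Defensive.
Import Order.TTheory GRing.Theory Num.Theory.
Local Open Scope ring_scope.

(* The estimate rests on the pairing identity
     <R*_N, X R_N> = <u*_N, (B - k A) u_N> = <u*_N, A u_N> (k_N - k),
   where X is the matrix whose operator norm is C_N^k.  Since A^-1 R_N = (M - k_N) u_N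
   and P commutes with M, (PMP - k_N I)^+ P A^-1 R_N = P u_N, and dually
   (P* M^T P* - k_N I)^+ P* R*_N = P* A^T u*_N; the middle factor M - k I absorbs P on
   both sides because it kills u.  Cauchy-Schwarz and the operator-norm bound then give
   |<u*_N, A u_N>| |k_N - k| <= C_N^k ||R_N|| ||R*_N||. *)

Section Euclidean.
Variables (R : realType) (n : nat).
Implicit Types (x y z : 'cV[R]_n) (X : 'M[R]_n) (c : R).

Lemma dotvE x y : dotv x y = \sum_i x i 0 * y i 0.
Proof. by rewrite /dotv mxE; apply: eq_bigr => i _; rewrite mxE. Qed.

Lemma dotvC x y : dotv x y = dotv y x.
Proof. by rewrite !dotvE; apply: eq_bigr => i _; rewrite mulrC. Qed.

Lemma dotv_mulmx x X y : dotv x (X *m y) = dotv (X^T *m x) y.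
Proof. by rewrite /dotv trmx_mul trmxK mulmxA. Qed.

Lemma dotvBr x y z : dotv x (y - z) = dotv x y - dotv x z.
Proof. by rewrite /dotv mulmxBr !mxE. Qed.

Lemma dotvZr x c y : dotv x (c *: y) = c * dotv x y.
Proof. by rewrite /dotv -scalemxAr mxE. Qed.

Lemma dotvBl x y z : dotv (x - y) z = dotv x z - dotv y z.
Proof. by rewrite dotvC dotvBr !(dotvC z). Qed.

Lemma dotvZl c x y : dotv (c *: x) y = c * dotv x y.
Proof. by rewrite dotvC dotvZr dotvC. Qed.

Lemma trmx_mul_dotv x y : x^T *m y = (dotv x y)%:M.
Proof. by apply/matrixP => i j; rewrite !ord1 [RHS]mxE mulr1n. Qed.

Lemma dotv0 x : dotv x 0 = 0.
Proof. by rewrite /dotv mulmx0 mxE. Qed.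

Lemma dotv_ge0 x : 0 <= dotv x x.
Proof. by rewrite dotvE; apply: sumr_ge0 => i _; rewrite -expr2 sqr_ge0. Qed.

Lemma dotv_eq0 x : (dotv x x == 0) = (x == 0).
Proof.
apply/eqP/eqP => [|->]; last exact: dotv0.
rewrite dotvE => /psumr_eq0P x0; apply/matrixP => i j; rewrite ord1 mxE.
by apply/eqP; rewrite -sqrf_eq0 expr2 x0 // => k _; rewrite -expr2 sqr_ge0.
Qed.

Lemma dotv_sqr_le x y : dotv x y ^+ 2 <= dotv x x * dotv y y.
Proof.
have [->|y0] := eqVneq y 0; first by rewrite !dotv0 expr0n mulr0.
have yy_gt0 : 0 < dotv y y by rewrite lt_def dotv_eq0 y0 dotv_ge0.
have := dotv_ge0 (dotv y y *: x - dotv x y *: y).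
rewrite !(dotvBl, dotvBr, dotvZl, dotvZr) (dotvC y x).
have -> : dotv y y * (dotv y y * dotv x x - dotv x y * dotv x y)
    - dotv x y * (dotv y y * dotv x y - dotv x y * dotv y y)
  = dotv y y * (dotv x x * dotv y y - dotv x y ^+ 2) by ring.
by rewrite pmulr_rge0 // subr_ge0.
Qed.

Lemma vnorm_ge0 x : 0 <= vnorm x.
Proof. exact: sqrtr_ge0. Qed.

Lemma vnorm0 : vnorm (0 : 'cV[R]_n) = 0.
Proof. by rewrite /vnorm dotv0 sqrtr0. Qed.

Lemma vnormZ c x : vnorm (c *: x) = `|c| * vnorm x.
Proof. by rewrite /vnorm dotvZl dotvZr mulrA -expr2 sqrtrM ?sqr_ge0 // sqrtr_sqr. Qed.

Lemma norm_dotv_le x y : `|dotv x y| <= vnorm x * vnorm y.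
Proof.
rewrite /vnorm -sqrtrM ?dotv_ge0 // -sqrtr_sqr.
exact/ler_wsqrtr/dotv_sqr_le.
Qed.

Lemma vnorm_mulmx_bounded X : exists c, forall x, vnorm (X *m x) <= c * vnorm x.
Proof.
exists (Num.sqrt (\sum_i dotv (row i X)^T (row i X)^T)) => x.
rewrite /vnorm -sqrtrM; last by rewrite sumr_ge0 // => i _; apply: dotv_ge0.
apply: ler_wsqrtr; rewrite [leLHS]dotvE mulr_suml; apply: ler_sum => i _.
have -> : (X *m x) i 0 = dotv (row i X)^T x.
  by rewrite dotvE mxE; apply: eq_bigr => j _; rewrite !mxE.
by rewrite -expr2 dotv_sqr_le.
Qed.

Lemma opnorm_ub X x : vnorm (X *m x) <= opnorm X * vnorm x.
Proof.
have [->|x0] := eqVneq x 0; first by rewrite mulmx0 vnorm0 mulr0.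
have vnorm_x_gt0 : 0 < vnorm x by rewrite sqrtr_gt0 lt_def dotv_eq0 x0 dotv_ge0.
have unit_x : vnorm ((vnorm x)^-1 *: x) = 1.
  by rewrite vnormZ gtr0_norm ?invr_gt0 // mulVf // gt_eqF.
have bounded : has_ubound [set vnorm (X *m v) | v in [set v | vnorm v = 1]]%classic.
  have [c Xc] := vnorm_mulmx_bounded X.
  by exists c => _ [v /= v1 <-]; rewrite -[c]mulr1 -v1 Xc.
have := ub_le_sup bounded (ex_intro2 _ _ _ unit_x erefl).
rewrite -scalemxAr vnormZ gtr0_norm ?invr_gt0 // -/(opnorm X).
by rewrite ler_pdivrMl // mulrC.
Qed.

Lemma norm_dotv_mulmx_le X x y :
  `|dotv y (X *m x)| <= opnorm X * vnorm x * vnorm y.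
Proof.
apply: le_trans (norm_dotv_le _ _) _.
by rewrite mulrC ler_wpM2r ?vnorm_ge0 ?opnorm_ub.
Qed.

End Euclidean.

Section Pencil.
Variables (R : realType) (n : nat) (A B : 'M[R]_n).
Hypothesis unitA : A \in unitmx.
Local Notation M := (invmx A *m B).

Lemma pencil_eigvec (l : R) (v : 'cV[R]_n) :
  l != 0 -> A *m v = l *: (B *m v) -> M *m v = l^-1 *: v.
Proof.
move=> l0 Av; rewrite -mulmxA -[B *m v]scale1r -(mulVf l0) -scalerA -Av.
by rewrite -scalemxAr mulKmx.
Qed.

Lemma pencil_left_eigvec (l : R) (v : 'cV[R]_n) :
  l != 0 -> A^T *m v = l *: (B^T *m v) -> M^T *m (A^T *m v) = l^-1 *: (A^T *m v).
Proof.
move=> l0 ATv; rewrite trmx_mul -mulmxA (mulmxA (invmx A)^T) -trmx_mul.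
by rewrite mulmxV // trmx1 mul1mx ATv scalerA mulVf // scale1r.
Qed.

Lemma invmx_mul_pencil c : invmx A *m (B - c *: A) = M - c%:M.
Proof. by rewrite mulmxBr -scalemxAr mulVmx // scalemx1. Qed.

Lemma mul_pencil_shift c : A *m (M - c%:M) = B - c *: A.
Proof. by rewrite mulmxBr mulKVmx // mul_mx_scalar. Qed.

Lemma trmx_pencil_factor c : B^T - c *: A^T = (M^T - c%:M) *m A^T.
Proof.
by rewrite mulmxBl mul_scalar_mx trmx_mul -mulmxA -trmx_mul mulmxV // trmx1 mulmx1.
Qed.

End Pencil.

Section Projector.
Variables (R : realType) (n : nat).
Implicit Types (u w v : 'cV[R]_n) (M : 'M[R]_n) (k : R).

Lemma trmx_projP u w : (projP u w)^T = projP w u.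
Proof. by rewrite /projP linearB /= trmx1 linearZ /= trmx_mul trmxK dotvC. Qed.

Lemma projP_orthE u w : dotv u w = 0 -> projP u w = 1%:M.
Proof. by rewrite /projP => ->; rewrite invr0 scale0r subr0. Qed.

Lemma projP_mul_vec u w : dotv u w != 0 -> projP u w *m u = 0.
Proof.
move=> uw0; rewrite mulmxBl mul1mx -scalemxAl -mulmxA trmx_mul_dotv.
by rewrite mul_mx_scalar scalerA (dotvC w u) mulVf // scale1r subrr.
Qed.

Lemma projP_idem u w : dotv u w != 0 -> projP u w *m projP u w = projP u w.
Proof.
move=> uw0; rewrite {2}/projP mulmxBr mulmx1 -scalemxAr mulmxA.
by rewrite projP_mul_vec // mul0mx scaler0 subr0.
Qed.

Lemma dotv_projP_eq0 u w v : dotv u w != 0 -> dotv w (projP u w *m v) = 0.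
Proof.
move=> uw0; rewrite dotv_mulmx trmx_projP projP_mul_vec; first by rewrite dotvC dotv0.
by rewrite dotvC.
Qed.

Lemma projP_comm u w M k : M *m u = k *: u -> M^T *m w = k *: w ->
  projP u w *m M = M *m projP u w.
Proof.
move=> Mu MTw; have wM : w^T *m M = k *: w^T.
  by rewrite -(trmxK M) -trmx_mul MTw linearZ.
rewrite /projP mulmxBl mulmxBr mul1mx mulmx1 -scalemxAl -scalemxAr.
by rewrite -mulmxA wM mulmxA Mu -scalemxAr -scalemxAl.
Qed.

Lemma shift_mul_projP u w M k : M *m u = k *: u ->
  (M - k%:M) *m projP u w = M - k%:M.
Proof.
move=> Mu; rewrite /projP mulmxBr mulmx1 -scalemxAr mulmxA mulmxBl Mu.
by rewrite mul_scalar_mx subrr mul0mx scaler0 subr0.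
Qed.

Lemma projP_mul_shift u w M k : M *m u = k *: u -> M^T *m w = k *: w ->
  projP u w *m (M - k%:M) = M - k%:M.
Proof.
move=> Mu MTw; rewrite mulmxBr (projP_comm Mu MTw) mul_mx_scalar -mul_scalar_mx.
by rewrite -mulmxBl shift_mul_projP.
Qed.

End Projector.

Section RestrictedPseudoInverse.
Variables (R : realType) (n : nat).
Implicit Types (w z v : 'cV[R]_n) (X M P Q : 'M[R]_n) (c : R).

Lemma restr_pinv_orth_eigvec X Q w z c :
  is_restr_pinv X w z Q -> X *m z = c *: z -> dotv w z = 0 -> z = 0.
Proof.
by case=> Qz pinvQ Xz wz; have [_ _ _ <-] := pinvQ z wz; rewrite Xz -scalemxAr Qz scaler0.
Qed.

Lemma restr_pinv_proj M P Q w z c v :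
  P *m P = P -> P *m M = M *m P -> (forall v, dotv w (P *m v) = 0) ->
  is_restr_pinv (P *m M *m P - c%:M) w z Q ->
  Q *m (P *m ((M - c%:M) *m v)) = P *m v.
Proof.
move=> PP PM wP [_ pinvQ]; have [_ _ _ <-] := pinvQ _ (wP v); congr (Q *m _).
rewrite !mulmxA; congr (_ *m v).
rewrite mulmxBl mulmxBr mul_scalar_mx mul_mx_scalar; congr (_ - _).
by rewrite -!mulmxA PP -PM mulmxA PP.
Qed.

End RestrictedPseudoInverse.

Section ResidualPairing.
Variables (R : realType) (n : nat) (A B Q Qs : 'M[R]_n) (u w : 'cV[R]_n) (k c : R).
Local Notation M := (invmx A *m B).
Local Notation P := (projP u w).
Local Notation Ps := (projP w u).
Implicit Types x y : 'cV[R]_n.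
Hypotheses (unitA : A \in unitmx) (uw_neq0 : dotv u w != 0).
Hypotheses (Mu : M *m u = k *: u) (MTw : M^T *m w = k *: w).
Hypothesis pinvQ : is_restr_pinv (P *m M *m P - c%:M) w u Q.
Hypothesis pinvQs : is_restr_pinv (Ps *m M^T *m Ps - c%:M) u w Qs.

Let wu_neq0 : dotv w u != 0. Proof. by rewrite dotvC. Qed.
Let orth_P v : dotv w (P *m v) = 0. Proof. exact: dotv_projP_eq0. Qed.
Let orth_Ps v : dotv u (Ps *m v) = 0. Proof. exact: dotv_projP_eq0. Qed.

Lemma restr_pinv_residual x :
  P *m (Q *m (P *m (invmx A *m ((B - c *: A) *m x)))) = P *m x.
Proof.
rewrite [invmx A *m _]mulmxA invmx_mul_pencil //.
rewrite (restr_pinv_proj x (projP_idem uw_neq0) (projP_comm Mu MTw) orth_P pinvQ).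
by rewrite mulmxA projP_idem.
Qed.

Lemma restr_pinv_coresidual y :
  Ps *m (Qs *m (Ps *m ((B^T - c *: A^T) *m y))) = Ps *m (A^T *m y).
Proof.
have MTTu : M^T^T *m u = k *: u by rewrite trmxK.
have PsMT := projP_comm MTw MTTu.
rewrite trmx_pencil_factor // -mulmxA.
rewrite (restr_pinv_proj _ (projP_idem wu_neq0) PsMT orth_Ps pinvQs).
by rewrite mulmxA projP_idem.
Qed.

Lemma residual_pairing x y :
  dotv ((B^T - c *: A^T) *m y)
       ((Ps *m Qs *m Ps)^T *m (M - k%:M) *m P *m Q *m P *m invmx A *m ((B - c *: A) *m x))
  = dotv y ((B - k *: A) *m x).
Proof.
rewrite -!mulmxA restr_pinv_residual dotv_mulmx trmxK -!mulmxA restr_pinv_coresidual.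
rewrite -[Ps]trmxK -dotv_mulmx trmx_projP.
rewrite mulmxA (projP_mul_shift Mu MTw) mulmxA (shift_mul_projP _ Mu).
by rewrite -dotv_mulmx mulmxA mul_pencil_shift.
Qed.

End ResidualPairing.

Theorem proposition2 (R : realType) (n : nat) (A B : 'M[R]_n) (lambda : R)
  (u us : 'cV[R]_n) (Q Qs : 'M[R]_n) (uN usN : 'cV[R]_n) :
  A \in unitmx ->
  (* lambda > 0 is a generalized eigenvalue, the unique one of smallest modulus *)
  0 < lambda ->
  gen_eigenvalue A B (real_complex R lambda) ->
  (forall mu : R[i], gen_eigenvalue A B mu -> mu != real_complex R lambda -> real_complex R lambda < `|mu|) ->
  (* k = 1/lambda is an algebraically simple eigenvalue of M = A^-1 B *)
  mup (lambda^-1) (char_poly (invmx A *m B)) = 1%N ->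
  (* unit eigenvectors *)
  vnorm u = 1 -> A *m u = lambda *: (B *m u) ->
  vnorm us = 1 -> A^T *m us = lambda *: (B^T *m us) ->
  let k := lambda^-1 in
  let M := invmx A *m B in
  let ust := (vnorm (A^T *m us))^-1 *: (A^T *m us) in
  let P := projP u ust in
  let Ps := projP ust u in
  dotv usN (A *m uN) != 0 ->
  let kN := dotv usN (B *m uN) / dotv usN (A *m uN) in
  ~ in_restr_spectrum (P *m M *m P) ust kN ->
  ~ in_restr_spectrum (Ps *m M^T *m Ps) u kN ->
  (* Q = (PMP - kN I)^+ , Qs = (P* M^T P* - kN I)^+ *)
  is_restr_pinv (P *m M *m P - kN%:M) ust u Q ->
  is_restr_pinv (Ps *m M^T *m Ps - kN%:M) u ust Qs ->
  let RN := (B - kN *: A) *m uN in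
  let RsN := (B^T - kN *: A^T) *m usN in
  let eta := vnorm RN * vnorm RsN / `|dotv usN (A *m uN)| in
  let C := opnorm ((Ps *m Qs *m Ps)^T *m (M - k%:M) *m P *m Q *m P *m invmx A) in
  `|kN - k| <= C * eta.
Proof.
(* The spectral hypotheses are what make P, Q and Qs well defined in the paper; with Q and
   Qs given, the bound needs only the eigenvector relations and the pseudo-inverse laws. *)
move=> unitA lambda_gt0 _ _ _ u1 Au _ Aus k M ust P Ps a_neq0 kN _ _ pinvQ pinvQs.
cbv zeta; set RN := (B - kN *: A) *m uN; set RsN := (B^T - kN *: A^T) *m usN.
set X := (Ps *m Qs *m Ps)^T *m (M - k%:M) *m P *m Q *m P *m invmx A.
have lambda_neq0 : lambda != 0 by rewrite gt_eqF.
have Mu : M *m u = k *: u := pencil_eigvec unitA lambda_neq0 Au.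
have MTust : M^T *m ust = k *: ust.
  by rewrite -scalemxAr (pencil_left_eigvec unitA lambda_neq0 Aus) !scalerA mulrC.
have u_ust_neq0 : dotv u ust != 0.
  (* Otherwise P = 1 (as 0^-1 = 0) and Q would invert PMP - kN on the eigenvector u. *)
  apply/eqP => u_ust0.
  have Xu : (P *m M *m P - kN%:M) *m u = (k - kN) *: u.
    by rewrite /P projP_orthE // mulmx1 mul1mx mulmxBl Mu mul_scalar_mx scalerBl.
  move: u1; rewrite (restr_pinv_orth_eigvec pinvQ Xu) ?vnorm0; last by rewrite dotvC.
  by move/eqP; rewrite eq_sym oner_eq0.
have pairing : dotv RsN (X *m RN) = dotv usN (A *m uN) * (kN - k).
  transitivity (dotv usN ((B - k *: A) *m uN)).
    exact: residual_pairing unitA u_ust_neq0 Mu MTust pinvQ pinvQs uN usN.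
  by rewrite mulmxBl dotvBr -scalemxAl dotvZr /kN; field.
rewrite mulrA ler_pdivlMr ?normr_gt0 // mulrC -normrM -pairing mulrA.
exact: norm_dotv_mulmx_le.
Qed.
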